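(* Let $D_K$ be a relative $K$-entropy satisfying Properties (a) and (b) below. Then for all positive semidefinite operators $S,T,\tilde T$ on a common Hilbert space with $\tilde T\ge T$, $$D_K(S\|T)\ge D_K(S\|\tilde T).$$
   Context: All Hilbert spaces are finite-dimensional. A relative $K$-entropy $D_K$ assigns to every pair $(S,T)$ of positive semidefinite operators on a common Hilbert space an extended real number $D_K(S\|T)$. Properties: (a) for every trace-preserving completely positive map $\mathcal{E}$ (possibly between different spaces), $D_K(\mathcal{E}(S)\|\mathcal{E}(T))\le D_K(S\|T)$; (b) for positive semidefinite $S,T$ on $\mathcal{H}$ and $T'$ on $\mathcal{H}'$, $D_K(S\oplus 0\,\|\,T\oplus T')=D_K(S\|T)$ (operators on $\mathcal{H}\oplus\mathcal{H}'$). *)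

From HB Require Import structures.
From mathcomp Require Import all_boot all_order all_algebra.
From mathcomp Require Import complex mxtens.
From mathcomp Require Import reals constructive_ereal.

Set Implicit Arguments.
Unset Strict Implicit.
Unset Printing Implicit Defensive.

Import Order.TTheory GRing.Theory Num.Theory.
Local Open Scope ring_scope.

Section Defs.
Variable R : realType.
Local Notation C := R[i].

Definition adjmx {m n} (A : 'M[C]_(m, n)) : 'M[C]_(n, m) := (map_mx Num.conj A)^T.

(* positive semidefinite operator on C^n: <v, A v> >= 0 for all v
   (over C this also forces A to be Hermitian) *)
Definition psd {n} (A : 'M[C]_n) : Prop :=
  forall v : 'cV[C]_n, 0 <= (adjmx v *m A *m v) 0 0.

(* complete positivity of a linear map E : M_n -> M_m:
   for every k, id_k (x) E maps PSD operators on C^k (x) C^n to PSD ones.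
   Any operator on C^k (x) C^n is written \sum_{a,b} |a><b| (x) B a b. *)
Definition completely_positive {n m} (E : {linear 'M[C]_n -> 'M[C]_m}) : Prop :=
  forall (k : nat) (B : 'I_k -> 'I_k -> 'M[C]_n),
    psd (\sum_(a < k) \sum_(b < k) (delta_mx a b *t B a b)) ->
    psd (\sum_(a < k) \sum_(b < k) (delta_mx a b *t E (B a b))).

Definition trace_preserving {n m} (E : {linear 'M[C]_n -> 'M[C]_m}) : Prop :=
  forall X : 'M[C]_n, \tr (E X) = \tr X.

Definition cptp {n m} (E : {linear 'M[C]_n -> 'M[C]_m}) : Prop :=
  completely_positive E /\ trace_preserving E.

(* Property (a): monotonicity (data processing) under CPTP maps *)
Definition DK_monotone (DK : forall n, 'M[C]_n -> 'M[C]_n -> \bar R) : Prop :=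
  forall (n m : nat) (E : {linear 'M[C]_n -> 'M[C]_m}) (S T : 'M[C]_n),
    cptp E -> psd S -> psd T -> (DK m (E S) (E T) <= DK n S T)%E.

(* Property (b): invariance under direct sums S (+) 0 || T (+) T' *)
Definition DK_direct_sum (DK : forall n, 'M[C]_n -> 'M[C]_n -> \bar R) : Prop :=
  forall (n n' : nat) (S T : 'M[C]_n) (T' : 'M[C]_n'),
    psd S -> psd T -> psd T' ->
    DK (n + n')%N (block_mx S 0 0 0) (block_mx T 0 0 T') = DK n S T.

End Defs.

From HB Require Import structures.
From mathcomp Require Import all_boot all_order all_algebra.
From mathcomp Require Import complex mxtens.
From mathcomp Require Import reals constructive_ereal.
Import Order.TTheory GRing.Theory Num.Theory.
Local Open Scope ring_scope.

(* The map X |-> X_11 + X_22 summing the two diagonal blocks of an operator on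
   H (+) H is completely positive (a sum of two compressions) and trace
   preserving.  It sends S (+) 0 to S and T (+) (T~ - T) to T~, so by (b) and
   then (a), D(S||T) = D(S (+) 0 || T (+) (T~ - T)) >= D(S||T~). *)

Section PsdMatrices.
Variable R : realType.
Local Notation C := R[i].

Lemma adjmxM m n p (A : 'M[C]_(m, n)) (B : 'M[C]_(n, p)) :
  adjmx (A *m B) = adjmx B *m adjmx A.
Proof. by rewrite /adjmx map_mxM trmx_mul. Qed.

Lemma adjmx_tens m n p q (A : 'M[C]_(m, n)) (B : 'M[C]_(p, q)) :
  adjmx (A *t B) = adjmx A *t adjmx B.
Proof. by rewrite /adjmx map_mxT trmx_tens. Qed.

Lemma adjmx1 m : adjmx (1%:M : 'M[C]_m) = 1%:M.
Proof. by rewrite /adjmx map_mx1 trmx1. Qed.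

Lemma adjmx0 m n : adjmx (0 : 'M[C]_(m, n)) = 0.
Proof. by rewrite /adjmx map_mx0 trmx0. Qed.

Lemma adjmx_col m1 m2 n (A : 'M[C]_(m1, n)) (B : 'M[C]_(m2, n)) :
  adjmx (col_mx A B) = row_mx (adjmx A) (adjmx B).
Proof. by rewrite /adjmx map_col_mx tr_col_mx. Qed.

Lemma tensmxDr m n p q (A : 'M[C]_(m, n)) (B D : 'M[C]_(p, q)) :
  A *t (B + D) = A *t B + A *t D.
Proof. by apply/matrixP=> i j; rewrite !mxE mulrDr. Qed.

Lemma psd0 n : psd (0 : 'M[C]_n).
Proof. by move=> v; rewrite mulmx0 mul0mx mxE. Qed.

Lemma psdD n (A B : 'M[C]_n) : psd A -> psd B -> psd (A + B).
Proof.
by move=> hA hB v; rewrite mulmxDr mulmxDl mxE; apply: addr_ge0; [exact: hA | exact: hB].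
Qed.

Lemma psd_adjmx_mul m n (M : 'M[C]_m) (W : 'M[C]_(m, n)) :
  psd M -> psd (adjmx W *m M *m W).
Proof. by move=> hM v; have := hM (W *m v); rewrite adjmxM !mulmxA. Qed.

Lemma psd_block_diag m n (A : 'M[C]_m) (B : 'M[C]_n) :
  psd A -> psd B -> psd (block_mx A 0 0 B).
Proof.
move=> hA hB v; rewrite -[v]vsubmxK adjmx_col mul_row_block !mulmx0 addr0 add0r.
by rewrite mul_row_col mxE; apply: addr_ge0.
Qed.

(* Compressions X |-> W^* X W are completely positive: on C^k (x) C^m they act
   as the compression by 1 (x) W. *)
Lemma psd_tens_compression k m n (B : 'I_k -> 'I_k -> 'M[C]_m) (W : 'M[C]_(m, n)) :
  psd (\sum_(a < k) \sum_(b < k) (delta_mx a b *t B a b)) ->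
  psd (\sum_(a < k) \sum_(b < k) (delta_mx a b *t (adjmx W *m B a b *m W))).
Proof.
move=> hB; suff -> : \sum_(a < k) \sum_(b < k) (delta_mx a b *t (adjmx W *m B a b *m W))
    = adjmx (1%:M *t W) *m (\sum_(a < k) \sum_(b < k) (delta_mx a b *t B a b))
        *m (1%:M *t W) by exact: psd_adjmx_mul.
rewrite mulmx_sumr mulmx_suml; apply: eq_bigr => a _.
rewrite mulmx_sumr mulmx_suml; apply: eq_bigr => b _.
by rewrite adjmx_tens adjmx1 !tensmx_mul mul1mx mulmx1.
Qed.

Lemma ulsubmx_compression m n (X : 'M[C]_(m + n)) :
  ulsubmx X = adjmx (col_mx 1%:M 0) *m X *m col_mx 1%:M 0.
Proof.
rewrite -[X in RHS]submxK adjmx_col adjmx1 adjmx0 mul_row_block.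
by rewrite !(mulmx0, mul0mx, mul1mx, addr0, mul_row_col, mulmx1).
Qed.

Lemma drsubmx_compression m n (X : 'M[C]_(m + n)) :
  drsubmx X = adjmx (col_mx 0 1%:M) *m X *m col_mx 0 1%:M.
Proof.
rewrite -[X in RHS]submxK adjmx_col adjmx1 adjmx0 mul_row_block.
by rewrite !(mulmx0, mul0mx, mul1mx, add0r, mul_row_col, mulmx1).
Qed.

Section DiagBlocksSum.
Variable n : nat.

Definition diag_blocks_sum (X : 'M[C]_(n + n)) : 'M[C]_n := ulsubmx X + drsubmx X.

Lemma diag_blocks_sum_is_linear : linear diag_blocks_sum.
Proof.
move=> a X Y; rewrite /diag_blocks_sum !ulsubmx_compression !drsubmx_compression.
rewrite !mulmxDr !mulmxDl -!scalemxAr -!scalemxAl scalerDr.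
by rewrite -!addrA; congr (_ + _); rewrite !addrA [_ + _ *: _]addrC.
Qed.

HB.instance Definition _ :=
  GRing.isLinear.Build C 'M[C]_(n + n) 'M[C]_n *:%R diag_blocks_sum
    diag_blocks_sum_is_linear.

Lemma diag_blocks_sum_block (A D : 'M[C]_n) :
  diag_blocks_sum (block_mx A 0 0 D) = A + D.
Proof. by rewrite /diag_blocks_sum block_mxKul block_mxKdr. Qed.

Lemma diag_blocks_sum_trace_preserving :
  trace_preserving (diag_blocks_sum : {linear _ -> _}).
Proof. by move=> X /=; rewrite -[X in RHS]submxK mxtrace_block mxtraceD. Qed.

Lemma diag_blocks_sum_completely_positive :
  completely_positive (diag_blocks_sum : {linear _ -> _}).
Proof.
move=> k B hB /=; rewrite /diag_blocks_sum.
under eq_bigr do under eq_bigr do rewrite tensmxDr.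
under eq_bigr do rewrite big_split.
rewrite big_split /=; apply: psdD.
- under eq_bigr do under eq_bigr do rewrite ulsubmx_compression.
  exact: psd_tens_compression.
- under eq_bigr do under eq_bigr do rewrite drsubmx_compression.
  exact: psd_tens_compression.
Qed.

Lemma diag_blocks_sum_cptp : cptp (diag_blocks_sum : {linear _ -> _}).
Proof.
split; [exact: diag_blocks_sum_completely_positive
       | exact: diag_blocks_sum_trace_preserving].
Qed.

End DiagBlocksSum.
End PsdMatrices.

Arguments psd_block_diag {R m n A B}.

Theorem lemma5 (R : realType)
    (DK : forall n : nat, 'M[R[i]]_n -> 'M[R[i]]_n -> \bar R) :
  DK_monotone DK -> DK_direct_sum DK ->
  forall (n : nat) (S T Tt : 'M[R[i]]_n),
    psd S -> psd T -> psd Tt -> psd (Tt - T) ->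
    (DK n S Tt <= DK n S T)%E.
Proof.
move=> monoDK sumDK n S T Tt psdS psdT _ psdTtT.
rewrite -(sumDK n n S T (Tt - T) psdS psdT psdTtT).
have := monoDK _ _ _ _ _ (diag_blocks_sum_cptp R n)
  (psd_block_diag psdS (psd0 R n)) (psd_block_diag psdT psdTtT).
by rewrite /= !diag_blocks_sum_block addr0 addrC subrK.
Qed.
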